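(* Let $q\equiv 3\pmod 4$ be a prime power. There are absolute constants $C,c>0$ such that for every $S\subset\mathbb{F}_q^2$ with $|S|\ge C q^{5/3}$, the number of rectangles with vertices in $S$ and non-zero side-lengths is at least $c\,|S|^4/q^3$.
   Context: For $u,v\in\mathbb{F}_q^2$, $u\cdot v=u_1v_1+u_2v_2$. Four points $x,z,y,t\in\mathbb{F}_q^2$ form a rectangle with vertices in the cyclic order $x,z,y,t$ if $(x-z)\cdot(y-z)=0$, $(z-y)\cdot(t-y)=0$, $(y-t)\cdot(x-t)=0$ and $(t-x)\cdot(z-x)=0$; the length of a side $uv$ is $(u-v)\cdot(u-v)$. Rectangles are counted as ordered quadruples of vertices. *)

From mathcomp Require Import all_boot all_algebra.
From Stdlib Require Import Reals.
Set Implicit Arguments. Unset Strict Implicit. Unset Printing Implicit Defensive.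
Import GRing.Theory.
Local Open Scope ring_scope.

Definition dotp (F : fieldType) (u v : F * F) : F := u.1 * v.1 + u.2 * v.2.
Definition subp (F : fieldType) (u v : F * F) : F * F := (u.1 - v.1, u.2 - v.2).

(* (x,z,y,t) is a rectangle with vertices in cyclic order x,z,y,t,
   all of whose side lengths are non-zero. *)
Definition is_rect_nz (F : fieldType) (x z y t : F * F) : bool :=
  [&& dotp (subp x z) (subp y z) == 0,
      dotp (subp z y) (subp t y) == 0,
      dotp (subp y t) (subp x t) == 0,
      dotp (subp t x) (subp z x) == 0,
      dotp (subp x z) (subp x z) != 0,
      dotp (subp z y) (subp z y) != 0,
      dotp (subp y t) (subp y t) != 0 &
      dotp (subp t x) (subp t x) != 0].

(* Number of rectangles (ordered quadruples) with vertices in S and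
   non-zero side lengths. *)
Definition nrect_nz (F : finFieldType) (S : {set F * F}) : nat :=
  #|[set p : (F * F) * (F * F) * (F * F) * (F * F) |
      [&& p.1.1.1 \in S, p.1.1.2 \in S, p.1.2 \in S, p.2 \in S &
          is_rect_nz p.1.1.1 p.1.1.2 p.1.2 p.2]]|.

From mathcomp Require Import all_boot all_algebra all_field zify ring.
Set Implicit Arguments. Unset Strict Implicit. Unset Printing Implicit Defensive.
Import GRing.Theory.

(* As q = 3 mod 4, -1 is not a square in F_q, so every u <> 0 has u.u <> 0 and
   frame u : (a, c) |-> a u + c u^perp is a similarity of F_q^2 with ratio u.u.
   Through frame u the set S becomes a bipartite graph on two copies of F_q with
   |S| edges, and each of its 4-cycles (x, x', y, y') with x <> x', y <> y' is a
   rectangle of S with non-zero sides.  Cauchy-Schwarz twice gives at least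
   |S|^4 / q^4 - 2 q |S| such 4-cycles for each of the q^2 - 1 directions u,
   while a rectangle together with x' - x determines u and the 4-cycle, so each
   rectangle is counted at most q times.  When |S|^3 >= 8 q^5 the degenerate term
   is at most a quarter of the main one, leaving |S|^4 / (4 q^3) rectangles. *)

Lemma leq_sqr_sum (T : finType) (a : T -> nat) :
  (\sum_i a i) ^ 2 <= #|T| * \sum_i a i ^ 2.
Proof.
rewrite -(leq_pmul2l (isT : 0 < 2)) mulnCA.
have -> : 2 * (\sum_i a i) ^ 2 = \sum_i \sum_j 2 * (a i * a j).
  rewrite expnS expn1 big_distrl big_distrr /=; apply: eq_bigr => i _.
  by rewrite big_distrr big_distrr /=; apply: eq_bigr => j _; rewrite mulnA.
have -> : #|T| * (2 * \sum_i a i ^ 2) = \sum_i \sum_j (a i ^ 2 + a j ^ 2).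
  rewrite [RHS](eq_bigr (fun i => #|T| * a i ^ 2 + \sum_j a j ^ 2)); last first.
    by move=> i _; rewrite big_split /= sum_nat_const.
  by rewrite big_split /= sum_nat_const -big_distrr /= mul2n -addnn mulnDr.
by apply: leq_sum => i _; apply: leq_sum => j _; rewrite (nat_Cauchy (a i) (a j)).
Qed.

Lemma sum_eqb_mul (T : finType) (i : T) (c : nat) : \sum_j (i == j) * c = c.
Proof.
rewrite -big_distrl /= (bigD1 i) //= eqxx big1 ?addn0 ?mul1n // => j /negPf.
by rewrite eq_sym => ->.
Qed.

Lemma card_set_sumE (T : finType) (P : pred T) : #|[set p | P p]| = \sum_p P p.
Proof.
rewrite -sum1_card big_mkcond /=; apply: eq_bigr => p _.
by rewrite inE; case: (P p).
Qed.

Lemma sum_pairE (I J : finType) (G : I * J -> nat) :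
  \sum_p G p = \sum_i \sum_j G (i, j).
Proof. by rewrite pair_bigA; apply: eq_bigr => -[i j]. Qed.

Lemma sum_card_setE (T U : finType) (P : pred T) (Q : T -> pred U) :
  \sum_(t | P t) #|[set u | Q t u]| = #|[set p : T * U | P p.1 && Q p.1 p.2]|.
Proof.
rewrite card_set_sumE sum_pairE big_mkcond /=; apply: eq_bigr => t _.
by case: (P t); rewrite ?card_set_sumE // big1.
Qed.

Lemma pow4_le_of_averaged_bound (q m n r : nat) :
  2 <= q -> m.+1 = q ^ 2 -> 8 * q ^ 5 <= n ^ 3 ->
  m * n ^ 4 <= q ^ 5 * r + m * (2 * q ^ 5 * n) -> n ^ 4 <= 4 * q ^ 3 * r.
Proof.
move=> q2 qm qn sum_le.
have deg_le : 4 * (m * (2 * q ^ 5 * n)) <= m * n ^ 4.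
  have : 8 * q ^ 5 * n <= n ^ 4 by rewrite [n ^ 4]expnSr leq_mul2r qn orbT.
  by rewrite mulnCA leq_mul2l !mulnA => ->; rewrite orbT.
have m_le : q ^ 2 <= 3 * m.
  have : 2 ^ 2 <= q ^ 2 by rewrite leq_exp2r.
  lia.
have : q ^ 2 * n ^ 4 <= q ^ 2 * (4 * q ^ 3 * r).
  apply: leq_trans (leq_mul m_le (leqnn (n ^ 4))) _.
  rewrite -mulnA [X in _ <= X](_ : _ = 4 * (q ^ 5 * r)); last by ring.
  lia.
by rewrite leq_pmul2l // expn_gt0 (ltnW q2).
Qed.

Section GridFourCycles.
Variables (I J : finType) (b : I -> J -> bool).

Definition grid_edges : nat := \sum_x \sum_y b x y.

Definition grid_codeg (x x' : I) : nat := \sum_y b x y * b x' y.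

Definition grid_c4 : nat := \sum_x \sum_x' grid_codeg x x' ^ 2.

Definition grid_rect (x x' : I) (y y' : J) : bool :=
  [&& x != x', y != y', b x y, b x y', b x' y & b x' y'].

Definition grid_rects : nat :=
  #|[set p : (I * I) * (J * J) | grid_rect p.1.1 p.1.2 p.2.1 p.2.2]|.

Lemma grid_edges_sqr_le : grid_edges ^ 2 <= #|J| * \sum_x \sum_x' grid_codeg x x'.
Proof.
have -> : \sum_x \sum_x' grid_codeg x x' = \sum_y (\sum_x (b x y : nat)) ^ 2.
  under eq_bigr do rewrite exchange_big /=.
  rewrite exchange_big; apply: eq_bigr => y _.
  rewrite expnS expn1 big_distrl; apply: eq_bigr => x _.
  by rewrite big_distrr.
by rewrite /grid_edges exchange_big leq_sqr_sum.
Qed.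

Lemma grid_edges_pow4_le : grid_edges ^ 4 <= (#|I| * #|J|) ^ 2 * grid_c4.
Proof.
have codeg_le := leq_sqr_sum (fun p : I * I => grid_codeg p.1 p.2).
rewrite -(pair_bigA _ grid_codeg) card_prod in codeg_le.
rewrite -(pair_bigA _ (fun x x' => grid_codeg x x' ^ 2)) /= in codeg_le.
have edges_le := leq_mul grid_edges_sqr_le grid_edges_sqr_le.
rewrite -expnD mulnACA mulnn in edges_le.
apply: leq_trans edges_le _.
rewrite [X in _ <= X](_ : _ = #|J| ^ 2 * (#|I| * #|I| * grid_c4)); last by ring.
by rewrite leq_mul2l codeg_le orbT.
Qed.

Lemma grid_rectsE :
  grid_rects = \sum_x \sum_x' \sum_y \sum_y' grid_rect x x' y y'.
Proof.
rewrite /grid_rects card_set_sumE !sum_pairE.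
by apply: eq_bigr => x _; apply: eq_bigr => x' _; rewrite sum_pairE.
Qed.

Lemma grid_c4E :
  grid_c4 = \sum_x \sum_x' \sum_y \sum_y' (b x y * b x' y) * (b x y' * b x' y').
Proof.
apply: eq_bigr => x _; apply: eq_bigr => x' _.
rewrite expnS expn1 big_distrl; apply: eq_bigr => y _.
by rewrite big_distrr.
Qed.

Lemma grid_c4_le : grid_c4 <= grid_rects + (#|I| + #|J|) * grid_edges.
Proof.
have diagxE : #|J| * grid_edges = \sum_x \sum_x' \sum_y \sum_(y' : J) (x == x') * b x y.
  rewrite /grid_edges big_distrr /=; apply: eq_bigr => x _.
  rewrite -(sum_eqb_mul x (#|J| * _)); apply: eq_bigr => x' _.
  rewrite !big_distrr; apply: eq_bigr => y _.
  by rewrite sum_nat_const mulnCA.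
have diagyE : #|I| * grid_edges = \sum_x \sum_(x' : I) \sum_y \sum_y' (y == y') * b x y.
  transitivity (\sum_x \sum_(x' : I) \sum_y (b x y : nat)).
    by rewrite /grid_edges big_distrr /=; apply: eq_bigr => x _; rewrite sum_nat_const.
  apply: eq_bigr => x _; apply: eq_bigr => x' _; apply: eq_bigr => y _.
  by rewrite sum_eqb_mul.
rewrite grid_c4E grid_rectsE mulnDl diagxE diagyE -!big_split /=.
apply: leq_sum => x _; rewrite -!big_split /=; apply: leq_sum => x' _.
rewrite -!big_split /=; apply: leq_sum => y _; rewrite -!big_split /=.
apply: leq_sum => y' _; rewrite /grid_rect.
by case: (x == x'); case: (y == y'); case: (b x y); case: (b x y');
   case: (b x' y); case: (b x' y').
Qed.

Lemma grid_edges_pow4_le_rects :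
  grid_edges ^ 4 <= (#|I| * #|J|) ^ 2 * (grid_rects + (#|I| + #|J|) * grid_edges).
Proof. by apply: leq_trans grid_edges_pow4_le _; rewrite leq_mul2l grid_c4_le orbT. Qed.

End GridFourCycles.

Local Open Scope ring_scope.

Section CardMod4.
Variable F : finFieldType.
Hypothesis card_F_mod4 : (#|F| %% 4 = 3)%N.

Lemma two_notin_pchar : (2%N \notin [pchar F]).
Proof.
apply/negP => char2; move: card_F_mod4; rewrite (card_pprimeChar char2).
by case: (logn _ _) => [|[|k]] //; rewrite !expnS; lia.
Qed.

(* i = i ^+ #|F| = i ^+ 3 = - i would force characteristic 2. *)
Lemma sqrf_neqN1 (i : F) : i ^+ 2 != -1.
Proof.
apply/eqP => i2.
have i4 : i ^+ 4 = 1 by rewrite (exprM i 2 2) i2 sqrrN expr1n.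
have : i = - i.
  rewrite -[LHS](expf_card i) (divn_eq #|F| 4) card_F_mod4 exprD mulnC exprM i4 expr1n mul1r.
  by rewrite exprS i2 mulrN1.
move/eqP; rewrite -subr_eq0 opprK -mulr2n -mulr_natr mulf_eq0 => /orP[/eqP i0 | two0].
  by move: i2; rewrite i0 expr0n /= => /eqP; rewrite eq_sym oppr_eq0 oner_eq0.
by case/negP: two_notin_pchar; rewrite inE /= two0.
Qed.

Lemma dotpp_eq0 (u : F * F) : (dotp u u == 0) = (u == 0).
Proof.
case: u => a c; apply/idP/idP => [|/eqP[-> ->]]; last by rewrite /dotp /= mulr0 addr0.
rewrite /dotp /= => /eqP uu0.
have sqr0 (x y : F) : x * x + y * y = 0 -> x = 0.
  move=> xy0; apply/eqP/negP => /negP x0; case/negP: (sqrf_neqN1 (y / x)).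
  rewrite expr_div_n -subr_eq0 opprK -(divff (expf_neq0 2 x0)) -mulrDl !expr2 addrC xy0.
  by rewrite mul0r.
by rewrite xpair_eqE (sqr0 _ _ uu0) (sqr0 c a) ?eqxx // addrC.
Qed.

End CardMod4.

Section Frame.
Variable F : fieldType.

Definition frame (u p : F * F) : F * F :=
  (p.1 * u.1 - p.2 * u.2, p.1 * u.2 + p.2 * u.1).

Lemma subp_frame (u p p' : F * F) :
  subp (frame u p) (frame u p') = frame u (subp p p').
Proof. by rewrite /subp /frame /=; congr (_, _); ring. Qed.

Lemma dotp_frame (u p p' : F * F) :
  dotp (frame u p) (frame u p') = dotp u u * dotp p p'.
Proof. by rewrite /dotp /frame /=; ring. Qed.

Lemma frame_conj (u p : F * F) :
  frame (u.1, - u.2) (frame u p) = (dotp u u * p.1, dotp u u * p.2).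
Proof. by rewrite /dotp /frame /=; congr (_, _); ring. Qed.

Lemma frame_inj (u : F * F) : dotp u u != 0 -> injective (frame u).
Proof.
move=> uu0 [a c] [a' c'] /(congr1 (frame (u.1, - u.2))).
by rewrite !frame_conj => -[/(mulfI uu0) -> /(mulfI uu0) ->].
Qed.

Lemma is_rect_nz_frame (u : F * F) (x x' y y' : F) :
  dotp u u != 0 -> x != x' -> y != y' ->
  is_rect_nz (frame u (x', y)) (frame u (x, y)) (frame u (x, y')) (frame u (x', y')).
Proof.
move=> uu0 xx' yy'.
have dx : x - x' != 0 by rewrite subr_eq0.
have dy : y - y' != 0 by rewrite subr_eq0.
rewrite /is_rect_nz !subp_frame !dotp_frame; set N := dotp u u.
rewrite /dotp /subp /= !subrr !mul0r !mulr0 !addr0 !add0r !mulr0 eqxx.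
by rewrite -[x' - x]opprB -[y' - y]opprB !mulrNN !mulf_neq0.
Qed.

Definition frame_rect (u : F * F) (x x' y y' : F) :=
  (frame u (x', y), frame u (x, y), frame u (x, y'), frame u (x', y')).

Lemma frame_rect_inj (u v : F * F) (x x' y y' z z' w w' : F) :
  dotp u u != 0 -> x != x' ->
  (frame_rect u x x' y y', x' - x) = (frame_rect v z z' w w', z' - z) ->
  [/\ u = v, x = z, x' = z', y = w & y' = w'].
Proof.
move=> uu0 xx' E.
have e1 : frame u (x', y) = frame v (z', w) := congr1 (fun r => r.1.1.1.1) E.
have e2 : frame u (x, y) = frame v (z, w) := congr1 (fun r => r.1.1.1.2) E.
have e3 : frame u (x, y') = frame v (z, w') := congr1 (fun r => r.1.1.2) E.
have dxz : x' - x = z' - z := congr1 snd E.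
have uv : u = v.
  (* the first side of the rectangle is (x' - x) u *)
  have := congr2 (@subp F) e1 e2; rewrite !subp_frame /subp /= !subrr -dxz.
  have dx : x' - x != 0 by rewrite subr_eq0 eq_sym.
  rewrite /frame /= !mul0r !subr0 !addr0.
  by case: u {uu0 E e1 e2 e3} v => [u1 u2] [v1 v2] /= [/(mulfI dx) -> /(mulfI dx) ->].
move: e2 e3 dxz; rewrite -uv => /(frame_inj uu0) [<- <-] /(frame_inj uu0) [<-] dxz.
by split=> //; rewrite -[z'](subrK x) -dxz subrK.
Qed.

End Frame.

Section RectCount.
Variable F : finFieldType.
Hypothesis card_F_mod4 : (#|F| %% 4 = 3)%N.
Variable S : {set F * F}.

Definition frame_grid (u : F * F) (x y : F) : bool := frame u (x, y) \in S.

Lemma frame_grid_edges (u : F * F) : u != 0 -> grid_edges (frame_grid u) = #|S|.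
Proof.
rewrite -dotpp_eq0 // => uu0.
rewrite /grid_edges -(sum_pairE (fun p => frame u p \in S)) -card_set_sumE.
rewrite -(card_preimset S (frame_inj uu0)).
by apply: eq_card => p; rewrite !inE.
Qed.

Lemma sum_frame_grid_rects :
  (\sum_(u : F * F | u != 0%R) grid_rects (frame_grid u) <= nrect_nz S * #|F|)%N.
Proof.
rewrite sum_card_setE /nrect_nz -cardsT -cardsX.
set A := [set p | _].
pose f (p : (F * F) * ((F * F) * (F * F))) :=
  let: (u, ((x, x'), (y, y'))) := p in (frame_rect u x x' y y', x' - x).
rewrite -(card_in_imset (f := f) (D := A)) ?subset_leq_card //.
  apply/subsetP => _ /imsetP [[u [[x x'] [y y']]] + ->].
  rewrite !inE /grid_rect /frame_grid /=.
  case/and3P => u0 xx' /and3P [yy' Sxy /and3P [Sxy' Sx'y Sx'y']].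
  by rewrite Sxy Sxy' Sx'y Sx'y' is_rect_nz_frame ?dotpp_eq0.
move=> [u [[x x'] [y y']]] [v [[z z'] [w w']]].
rewrite !inE /grid_rect /= => /and3P [u0 xx' _] _.
by case/frame_rect_inj; rewrite ?dotpp_eq0 // => -> -> -> -> ->.
Qed.

Lemma nrect_nz_lb_nat :
  (8 * #|F| ^ 5 <= #|S| ^ 3)%N -> (#|S| ^ 4 <= 4 * #|F| ^ 3 * nrect_nz S)%N.
Proof.
move=> large; have q2 : (2 <= #|F|)%N by lia.
set q := #|F|; set n := #|S|.
have per_u (u : F * F) : u != 0 ->
    (n ^ 4 <= q ^ 4 * (grid_rects (frame_grid u) + 2 * q * n))%N.
  move=> u0; have := grid_edges_pow4_le_rects (frame_grid u).
  by rewrite frame_grid_edges // mulnn -expnM addnn -mul2n.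
apply: (pow4_le_of_averaged_bound q2 _ large (m := #|[set u : F * F | u != 0]|)).
  have -> : [set u : F * F | u != 0] = [set~ (0 : F * F)] by apply/setP => u; rewrite !inE.
  by rewrite cardsC1 card_prod prednK ?muln_gt0 ?andbb ?(ltnW q2) // mulnn.
set m := #|_|; set R := nrect_nz S.
apply: (@leq_trans
  (\sum_(u : F * F | u != 0) q ^ 4 * (grid_rects (frame_grid u) + 2 * q * n))).
  by rewrite -sum_nat_cond_const; apply: leq_sum.
rewrite -big_distrr /= big_split /= sum_nat_cond_const mulnDr leq_add //.
  rewrite [X in (_ <= X)%N](_ : _ = q ^ 4 * (R * q))%N; last by ring.
  by rewrite leq_mul2l sum_frame_grid_rects orbT.
by rewrite [X in (X <= _)%N](_ : _ = m * (2 * q ^ 5 * n))%N; last by ring.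
Qed.

End RectCount.

(* Imported only now: Stdlib's Arith notations would shadow ssrnat's [^] and [%N]. *)
From Stdlib Require Import Reals Lra.
Local Open Scope R_scope.

Lemma INR_expn (a k : nat) : INR (expn a k) = INR a ^ k.
Proof. by elim: k => [|k IH]; rewrite ?expn0 // expnS mult_INR IH. Qed.

Lemma Rpower_five_thirds_cube (x : R) : 0 < x -> Rpower x (5 / 3) ^ 3 = x ^ 5.
Proof.
move=> x0; rewrite -Rpower_pow; last exact: exp_pos.
by rewrite Rpower_mult -Rpower_pow //; congr Rpower; rewrite /=; field.
Qed.

Lemma nrect_nz_lb (F : finFieldType) (S : {set F * F}) : (#|F| %% 4 = 3)%nat ->
  8 * INR #|F| ^ 5 <= INR #|S| ^ 3 -> INR #|S| ^ 4 <= 4 * INR #|F| ^ 3 * INR (nrect_nz S).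
Proof.
move=> hF large.
rewrite -!INR_expn (_ : 4 = INR 4); last by rewrite /=; lra.
rewrite -!mult_INR; apply/le_INR/leP/nrect_nz_lb_nat => //.
apply/leP/INR_le; rewrite mult_INR !INR_expn (_ : INR 8 = 8) //.
by rewrite /=; lra.
Qed.

Theorem lemma2p3 :
  exists C c : R, 0 < C /\ 0 < c /\
    forall (F : finFieldType), (#|F| %% 4 = 3%nat)%nat ->
    forall S : {set F * F},
      C * Rpower (INR #|F|) (5 / 3) <= INR #|S| ->
      c * (INR #|S|) ^ 4 / (INR #|F|) ^ 3 <= INR (nrect_nz S).
Proof.
exists 2, (1 / 4); split; first lra; split; first lra.
move=> F hF S hS.
have q_gt0 : 0 < INR #|F| by apply/lt_0_INR/ltP; lia.
have q3_gt0 : 0 < INR #|F| ^ 3 by apply: pow_lt.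
have large : 8 * INR #|F| ^ 5 <= INR #|S| ^ 3.
  rewrite -(Rpower_five_thirds_cube q_gt0) (_ : 8 = 2 ^ 3) -?Rpow_mult_distr; last by lra.
  by apply: pow_incr; split; [have := exp_pos (5 / 3 * ln (INR #|F|)); rewrite /Rpower; lra|].
have lb := nrect_nz_lb hF large.
apply: (Rmult_le_reg_r _ _ _ q3_gt0).
rewrite (_ : _ / _ * _ = 1 / 4 * INR #|S| ^ 4); first by lra.
by field; apply: Rgt_not_eq.
Qed.
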